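(* Let $\rho:\mathfrak k\to\operatorname{End}(L^s)$ be a generalized spin representation of the maximal compact subalgebra $\mathfrak k$ of a simply laced Kac--Moody algebra over a field $F$ of characteristic $0$ with diagram $D=(V,E)$, and put $A_i:=2I\cdot\rho(X_i)$. Let $W=\langle s_1,\dots,s_n\mid (s_is_j)^{m_{ij}}=1\rangle$ with $m_{ii}=1$, $m_{ij}=2$ if $i\ne j$ and $\{v_i,v_j\}\notin E$, and $m_{ij}=4$ if $\{v_i,v_j\}\in E$. Then $s_i\mapsto A_i$ extends to a group homomorphism $W\to\mathrm{GL}_s(L)$.
   Context: $L=F(I)$ with $I^2=-1$. $X_1,\dots,X_n$ are the Berman generators of $\mathfrak k$: $\mathfrak k$ is the Lie algebra generated by $X_i=e_i-f_i$ with defining relations $[X_i,[X_i,X_j]]=-X_j$ for adjacent $v_i,v_j$ and $[X_i,X_j]=0$ for non-adjacent $i\neq j$. A generalized spin representation is a Lie algebra homomorphism $\rho:\mathfrak k\to\operatorname{End}(L^s)$ with $\rho(X_i)^2=-\tfrac14\mathrm{id}_s$ for all $i$. *)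

From HB Require Import structures.
From mathcomp Require Import all_boot all_order all_algebra all_field.
Set Implicit Arguments. Unset Strict Implicit. Unset Printing Implicit Defensive.
Import Order.TTheory GRing.Theory Num.Theory.
Local Open Scope ring_scope.

Definition lie_br (R : comNzRingType) (s : nat) (A B : 'M[R]_s) : 'M[R]_s :=
  A *m B - B *m A.

(* Matrix power A^k computed with *m (works for every s, including s = 0). *)
Definition mxpow (R : comNzRingType) (s : nat) (A : 'M[R]_s) (k : nat) : 'M[R]_s :=
  iter k (mulmx A) 1%:M.

Definition simple_graph (n : nat) (e : rel 'I_n) : Prop :=
  symmetric e /\ irreflexive e.

(* Since k is defined by the
   generators X_i and the given defining relations, a Lie algebra homomorphism
   rho : k -> End(L^s) is the same as a family of endomorphisms satisfying
   these relations (universal property of the presentation). *)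
Definition gen_spin_rep (R : fieldType) (n s : nat) (e : rel 'I_n)
    (X : 'I_n -> 'M[R]_s) : Prop :=
  [/\ (forall i j, e i j ->
         lie_br (X i) (lie_br (X i) (X j)) = - X j),
      (forall i j, i != j -> ~~ e i j -> lie_br (X i) (X j) = 0)
    & (forall i, X i *m X i = - ((4%:R : R)^-1) *: (1%:M : 'M[R]_s))].

Definition cox_m (n : nat) (e : rel 'I_n) (i j : 'I_n) : nat :=
  if i == j then 1%N else if e i j then 4%N else 2%N.

(* s_i |-> A_i extends to a group homomorphism
   W = < s_1..s_n | (s_i s_j)^{m_ij} = 1 > -> GL_s(L)
   (von Dyck: the A_i are invertible and satisfy the defining relations). *)
Definition extends_to_W_hom (R : fieldType) (n s : nat) (e : rel 'I_n)
    (A : 'I_n -> 'M[R]_s) : Prop :=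
  (forall i, A i \in unitmx) /\
  (forall i j, mxpow (A i *m A j) (cox_m e i j) = 1%:M).

From HB Require Import structures.
From mathcomp Require Import all_boot all_order all_algebra all_field.
Set Implicit Arguments. Unset Strict Implicit. Unset Printing Implicit Defensive.
Import Order.TTheory GRing.Theory Num.Theory.
Local Open Scope ring_scope.

(* Rescaling by [2I] (whose square is [-4]) turns the relation
   [X_i^2 = -1/4] into [A_i^2 = 1]; on the involutions [A_i] the double
   bracket [[A, [A, B]] = 2B - 2ABA] is then a sandwich, and the defining
   relations of the Berman generators say exactly that [A_i] and [A_j]
   commute when [v_i, v_j] are not adjacent and anticommute when they are.
   Hence [(A_i A_j)^2] is [1], resp. [-1], and [(A_i A_j)^4 = 1]. *)

Section MatrixIdentities.

Variables (R : comNzRingType) (s : nat).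
Implicit Types M : 'M[R]_s.

Lemma mxpow1 M : mxpow M 1 = M.
Proof. by rewrite /mxpow /= mulmx1. Qed.

Lemma mxpow2 M : mxpow M 2 = M *m M.
Proof. by rewrite /mxpow /= mulmx1. Qed.

Lemma mxpow4 M : mxpow M 4 = mxpow (M *m M) 2.
Proof. by rewrite !mxpow2 /mxpow /= mulmx1 !mulmxA. Qed.

Lemma mxpow4_sqrN1 M : M *m M = - 1%:M -> mxpow M 4 = 1%:M.
Proof. by move=> M2; rewrite mxpow4 mxpow2 M2 mulmxN mulNmx opprK mulmx1. Qed.

Implicit Types A B : 'M[R]_s.

Lemma lie_brZ a b A B : lie_br (a *: A) (b *: B) = (a * b) *: lie_br A B.
Proof.
by rewrite /lie_br -!scalemxAl -!scalemxAr !scalerA mulrC scalerBr.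
Qed.

Lemma lie_br_eq0 A B : lie_br A B = 0 -> A *m B = B *m A.
Proof. by move/eqP; rewrite subr_eq0 => /eqP. Qed.

Lemma lie_br_lie_br_invol A B :
  A *m A = 1%:M -> lie_br A (lie_br A B) = B *+ 2 - (A *m B *m A) *+ 2.
Proof.
move=> A2; rewrite /lie_br !mulmxBr !mulmxBl !mulmxA A2 mul1mx.
by rewrite -(mulmxA B) A2 mulmx1 opprB -mulr2n mulrnBl.
Qed.

Lemma mulmx_comm_invol_sqr A B :
  A *m A = 1%:M -> B *m B = 1%:M -> A *m B = B *m A -> (A *m B) *m (A *m B) = 1%:M.
Proof.
by move=> A2 B2 AB; rewrite mulmxA -(mulmxA A) -AB mulmxA A2 mul1mx B2.
Qed.

Lemma mulmx_anticomm_invol_sqr A B :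
  B *m B = 1%:M -> A *m B *m A = - B -> (A *m B) *m (A *m B) = - 1%:M.
Proof. by move=> B2 ABA; rewrite mulmxA ABA mulNmx B2. Qed.

End MatrixIdentities.

Lemma sandwich_of_lie_br_invol (R : fieldType) (s : nat) (A B : 'M[R]_s) :
  (2%:R : R) != 0 -> A *m A = 1%:M -> lie_br A (lie_br A B) = B *+ 4 ->
  A *m B *m A = - B.
Proof.
move=> n2 A2; rewrite lie_br_lie_br_invol //.
rewrite (_ : B *+ 4 = B *+ 2 + B *+ 2); last by rewrite -mulrnDr.
move/addrI/eqP; rewrite eqr_oppLR -mulNrn -!scaler_nat => /eqP.
by move/(congr1 (fun M => (2%:R : R)^-1 *: M)); rewrite !scalerA mulVf // !scale1r.
Qed.

Lemma pchar0_two_neq0 (F : fieldType) (L : fieldExtType F) :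
  [pchar F] =i pred0 -> (2%:R : L) != 0.
Proof.
move=> charF0; apply/negP => /eqP two0.
have : 2%N \in [pchar L] by rewrite inE /= two0 eqxx.
by rewrite pchar_lalg charF0.
Qed.

Theorem mainTheorem6
  (F : fieldType) (charF0 : [pchar F] =i pred0)
  (L : fieldExtType F) (I : L) (hI : I ^+ 2 = -1)
  (hL : (<<1%VS; I>>)%AS = fullv :> {vspace L})
  (n : nat) (e : rel 'I_n) (hD : simple_graph e)
  (s : nat) (X : 'I_n -> 'M[L]_s) (hrho : gen_spin_rep e X) :
  extends_to_W_hom e (fun i => (2%:R * I) *: X i).
Proof.
have n2 := pchar0_two_neq0 L charF0.
case: hrho => Hadj Hnadj Hsq.
set c := 2%:R * I; set A := fun i => c *: X i.
have c2 : c * c = - 4%:R by rewrite /c mulrACA -(expr2 I) hI -natrM mulrN1.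
have A2 i : A i *m A i = 1%:M.
  rewrite /A -scalemxAl -scalemxAr scalerA Hsq scalerA c2 mulrNN divff ?scale1r //.
  by rewrite (natrM L 2 2) mulf_neq0.
split=> [i | i j]; first exact: (mulmx1_unit (A2 i)).1.
rewrite /cox_m; case: eqVneq => [<- | ij]; first by rewrite mxpow1 A2.
case: ifP => eij.
- apply/mxpow4_sqrN1/mulmx_anticomm_invol_sqr => //.
  apply: sandwich_of_lie_br_invol => //.
  rewrite !lie_brZ Hadj // c2 mulrN scaleNr scalerN opprK.
  by rewrite [c * _]mulrC -scalerA scaler_nat.
- rewrite mxpow2 mulmx_comm_invol_sqr // lie_br_eq0 //.
  by rewrite lie_brZ Hnadj ?eij // scaler0.
Qed.
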